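(* Consider the Accelerated Preference Optimization (APO) procedure described in the context, run with an arbitrary loss function $\ell$, learning rate $\beta>0$ and extrapolation parameter $\alpha>0$, $\alpha\neq 1$. Suppose that for each iteration $t\in\{0,\dots,T\}$ the normalized extrapolated policy $\pi_{t+1}$, i.e. the normalization of $\hat{\pi}_{t+1}(y|x)\cdot\big(\hat{\pi}_{t+1}(y|x)/\hat{\pi}_{t}(y|x)\big)^{\alpha}$, belongs to the policy class $\Pi$. Then for every $t\in\{0,\dots,T\}$, every $x\in\mathcal{X}$ and $y\in\mathcal{Y}$, $$\hat{\pi}_{t+1}(y|x)=\frac{1}{Z_t(x)}\,\pi_{\mathrm{ref}}(y|x)\,\exp\Bigg(\frac{1}{\beta}\sum_{i=0}^{t}\Big(\frac{1}{1-\alpha}-\frac{\alpha^{t+1-i}}{1-\alpha}\Big)\, r_i(x,y)\Bigg),$$ where $r_i(x,y)=\beta\log\hat{\pi}_{i+1}(y|x)-\beta\log\pi_i(y|x)$ is the reparameterized reward at iteration $i$, and $Z_t(x)=\sum_{y}\pi_{\mathrm{ref}}(y|x)\exp\big(\sum_{i=0}^{t}(1/(1-\alpha)-\alpha^{t+1-i}/(1-\alpha))\, r_i(x,y)/\beta\big)$ is the normalizing constant.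
   Context: Let $\mathcal{X}$ (prompts) and $\mathcal{Y}$ (responses) be finite sets and $\rho$ a distribution on $\mathcal{X}$. A policy is a map $\pi:\mathcal{X}\to\Delta(\mathcal{Y})$; $\Pi$ is a class of policies with full support (so all logarithms below are defined). The APO procedure takes a reference policy $\pi_{\mathrm{ref}}\in\Pi$, $\beta>0$, an extrapolation parameter $\alpha$, a number of iterations $T$, a sample size $N$ and a loss $\ell(r,x,y^w,y^l,\pi_t)\in\mathbb{R}$. Initialize $\pi_0=\hat{\pi}_0=\pi_{\mathrm{ref}}$. For $t=0,1,\dots,T$: collect a dataset $\mathcal{D}_t$ of $N$ triples $(x,y^w,y^l)$ with $x\sim\rho$, two responses drawn from $\pi_t(\cdot|x)$, and $y^w,y^l$ the preferred and dispreferred of the two; for $\pi\in\Pi$ set $r_\pi(x,y)=\beta\log\frac{\pi(y|x)}{\pi_t(y|x)}$; set $\hat{\pi}_{t+1}\in\arg\min_{\pi\in\Pi}\frac1N\sum_{(x,y^w,y^l)\in\mathcal{D}_t}\ell(r_\pi,x,y^w,y^l,\pi_t)$; then set $\pi_{t+1}(y|x)=\frac{1}{Z'_t(x)}\hat{\pi}_{t+1}(y|x)\big(\hat{\pi}_{t+1}(y|x)/\hat{\pi}_{t}(y|x)\big)^{\alpha}$ with $Z'_t(x)$ the normalizing constant. The output is $\hat{\pi}_{T+1}$. *)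

From mathcomp Require Import all_boot all_order all_algebra.
From mathcomp Require Import all_classical all_reals all_analysis.
Set Implicit Arguments. Unset Strict Implicit. Unset Printing Implicit Defensive.
Import Order.TTheory GRing.Theory Num.Theory.
Local Open Scope ring_scope.

Section APO.
Variables (R : realType) (X Y : finType).

Definition policy := X -> Y -> R.

Definition full_support_policy (pi : policy) : Prop :=
  forall x, (forall y, 0 < pi x y) /\ \sum_(y : Y) pi x y = 1.

Definition reparam_reward (beta : R) (pi pit : policy) : X -> Y -> R :=
  fun x y => beta * ln (pi x y / pit x y).

Definition emp_loss (N : nat)
  (l : (X -> Y -> R) -> X -> Y -> Y -> policy -> R)
  (beta : R) (D : seq (X * Y * Y)) (pit pi : policy) : R :=
  N%:R^-1 * \sum_(d <- D) l (reparam_reward beta pi pit) d.1.1 d.1.2 d.2 pit.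

Definition extrapolate (alpha : R) (hnew hold : policy) : policy :=
  fun x y =>
    hnew x y * powR (hnew x y / hold x y) alpha /
    \sum_(y' : Y) hnew x y' * powR (hnew x y' / hold x y') alpha.

Definition iter_reward (beta : R) (hpi pi : nat -> policy) (i : nat) : X -> Y -> R :=
  fun x y => beta * ln (hpi i.+1 x y) - beta * ln (pi i x y).

Definition apo_coef (alpha : R) (t i : nat) : R :=
  (1 - alpha) ^-1 - alpha ^+ (t.+1 - i) / (1 - alpha).

Definition apo_exponent (alpha beta : R) (hpi pi : nat -> policy) (t : nat)
  (x : X) (y : Y) : R :=
  beta^-1 * \sum_(i < t.+1) apo_coef alpha t i * iter_reward beta hpi pi i x y.

Definition apo_Z (alpha beta : R) (pref : policy) (hpi pi : nat -> policy)
  (t : nat) (x : X) : R :=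
  \sum_(y : Y) pref x y * expR (apo_exponent alpha beta hpi pi t x y).

End APO.

(* With a_i = ln hpi_i and b_i = ln pi_i, the extrapolation step reads
   b_(i+1) = (1 + alpha) a_(i+1) - alpha a_i - ln Z'_i, so the rewards
   r_i = a_(i+1) - b_i satisfy r_(i+1) = d_(i+1) - alpha d_i + ln Z'_i with
   d_i = a_(i+1) - a_i.  Inverting this first-order filter and summing over i
   gives a_(t+1) - a_0 = sum_i (1 - alpha^(t+1-i)) / (1 - alpha) r_i up to a
   constant depending only on x; exponentiating and normalizing removes it. *)

From mathcomp Require Import all_boot all_order all_algebra.
From mathcomp Require Import all_classical all_reals all_analysis.
From mathcomp Require Import ring.
Set Implicit Arguments. Unset Strict Implicit. Unset Printing Implicit Defensive.
Import Order.TTheory GRing.Theory Num.Theory.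
Local Open Scope ring_scope.

Section ApoCoef.
Variables (R : realType) (alpha : R).

Lemma apo_coef_eq0 t i : (t < i)%N -> apo_coef alpha t i = 0.
Proof. by move=> lt_ti; rewrite /apo_coef (eqnP lt_ti) expr0 mul1r subrr. Qed.

Hypothesis alpha_neq1 : alpha != 1.

Lemma apo_coefS t i : (i <= t.+1)%N ->
  apo_coef alpha t.+1 i = 1 + alpha * apo_coef alpha t i.
Proof.
have alpha1 : 1 - alpha != 0 by rewrite subr_eq0 eq_sym.
by move=> le_it; rewrite /apo_coef (subSn le_it) exprS; field.
Qed.

Lemma sum_apo_coefS (f : nat -> R) t :
  \sum_(i < t.+2) apo_coef alpha t.+1 i * f i =
  alpha * \sum_(i < t.+1) apo_coef alpha t i * f i + \sum_(i < t.+2) f i.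
Proof.
have -> : \sum_(i < t.+1) apo_coef alpha t i * f i =
          \sum_(i < t.+2) apo_coef alpha t i * f i.
  by rewrite [RHS]big_ord_recr /= apo_coef_eq0 // mul0r addr0.
rewrite mulr_sumr -big_split; apply: eq_bigr => i _ /=.
rewrite apo_coefS; last by rewrite -ltnS.
by rewrite mulrDl mul1r mulrA addrC.
Qed.

End ApoCoef.

Section LogDynamics.
Variables (R : realType) (Y : Type) (alpha : R) (n : nat).
Variables (a b : nat -> Y -> R) (c : nat -> R).
Hypothesis b0 : b 0%N =1 a 0%N.
Hypothesis bS : forall i, (i < n)%N -> forall y,
  b i.+1 y = (1 + alpha) * a i.+1 y - alpha * a i y - c i.

Lemma sum_reward_telescope t y : (t <= n)%N ->
  \sum_(i < t.+1) (a i.+1 y - b i y) =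
  a t.+1 y - alpha * a t y - (1 - alpha) * a 0%N y + \sum_(i < t) c i.
Proof.
elim: t => [|t IH] le_tn; first by rewrite big_ord1 big_ord0 b0; ring.
by rewrite big_ord_recr /= IH 1?ltnW // bS // big_ord_recr /=; ring.
Qed.

Hypothesis alpha_neq1 : alpha != 1.

Lemma sum_apo_coef_reward t y : (t <= n)%N ->
  \sum_(i < t.+1) apo_coef alpha t i * (a i.+1 y - b i y) =
  a t.+1 y - a 0%N y + \sum_(i < t) apo_coef alpha t i.+1 * c i.
Proof.
elim: t => [|t IH] le_tn.
  rewrite big_ord1 big_ord0 b0 /apo_coef subn0 expr1.
  have alpha1 : 1 - alpha != 0 by rewrite subr_eq0 eq_sym.
  have -> : (1 - alpha)^-1 - alpha / (1 - alpha) = 1 by field.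
  by ring.
have sum_cS : \sum_(i < t.+1) apo_coef alpha t.+1 i.+1 * c i =
    alpha * \sum_(i < t) apo_coef alpha t i.+1 * c i + \sum_(i < t.+1) c i.
  rewrite (eq_bigr (fun i : 'I_t.+1 => alpha * (apo_coef alpha t i.+1 * c i) + c i)).
    by rewrite big_split -mulr_sumr big_ord_recr /= apo_coef_eq0 // mul0r addr0.
  by move=> i _; rewrite apo_coefS // mulrDl mul1r mulrA addrC.
rewrite (sum_apo_coefS alpha_neq1 (fun i => a i.+1 y - b i y)) IH 1?ltnW //.
by rewrite sum_reward_telescope // sum_cS; ring.
Qed.

End LogDynamics.

Lemma ln_extrapolate (R : realType) (X Y : finType) (alpha : R)
    (hnew hold : policy R X Y) x y :
  (forall y, 0 < hnew x y) -> (forall y, 0 < hold x y) ->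
  ln (extrapolate alpha hnew hold x y) =
  (1 + alpha) * ln (hnew x y) - alpha * ln (hold x y)
  - ln (\sum_(y' : Y) hnew x y' * powR (hnew x y' / hold x y') alpha).
Proof.
move=> hnew_gt0 hold_gt0.
have weight_gt0 y' : 0 < hnew x y' * powR (hnew x y' / hold x y') alpha.
  by rewrite mulr_gt0 ?powR_gt0 ?divr_gt0.
have norm_gt0 : 0 < \sum_(y' : Y) hnew x y' * powR (hnew x y' / hold x y') alpha.
  rewrite (bigD1 y) //= ltr_pwDl // sumr_ge0 // => y' _.
  exact/ltW/weight_gt0.
rewrite /extrapolate ln_div ?posrE // lnM ?posrE ?powR_gt0 ?divr_gt0 //.
by rewrite ln_powR ln_div ?posrE //; ring.
Qed.

Definition exp_tilt {R : realType} {Y : finType} (q s : Y -> R) (y : Y) : R :=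
  (\sum_(y' : Y) q y' * expR (s y'))^-1 * q y * expR (s y).

Lemma exp_tilt_of_ln_shift (R : realType) (Y : finType) (p q s : Y -> R) (K : R) :
  (forall y, 0 < p y) -> (forall y, 0 < q y) -> \sum_(y : Y) p y = 1 ->
  (forall y, ln (p y) = ln (q y) + s y + K) -> p =1 exp_tilt q s.
Proof.
move=> p_gt0 q_gt0 sum_p1 ln_pE.
have pE y : p y = q y * expR (s y) * expR K.
  by rewrite -[p y]lnK ?posrE // ln_pE !expRD lnK ?posrE.
have normK : (\sum_(y : Y) q y * expR (s y)) * expR K = 1.
  by rewrite mulr_suml -sum_p1; apply: eq_bigr => y _; rewrite pE.
by move=> y; rewrite /exp_tilt (mulr1_eq normK) pE mulrC mulrA.
Qed.

Lemma apo_exponentE (R : realType) (X Y : finType) (alpha beta : R)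
    (hpi pi : nat -> policy R X Y) t x y : beta != 0 ->
  apo_exponent alpha beta hpi pi t x y =
  \sum_(i < t.+1) apo_coef alpha t i * (ln (hpi i.+1 x y) - ln (pi i x y)).
Proof.
move=> beta_neq0; rewrite /apo_exponent mulr_sumr; apply: eq_bigr => i _.
by rewrite /iter_reward -mulrBr mulrCA mulKf.
Qed.

Theorem theorem1 (R : realType) (X Y : finType)
  (Pi : policy R X Y -> Prop)
  (HPi : forall p, Pi p -> full_support_policy p)
  (pref : policy R X Y) (Hpref : Pi pref)
  (beta alpha : R) (Hbeta : 0 < beta) (Halpha : 0 < alpha) (Halpha1 : alpha != 1)
  (T N : nat)
  (l : (X -> Y -> R) -> X -> Y -> Y -> policy R X Y -> R)
  (D : nat -> seq (X * Y * Y)) (HD : forall t, (t <= T)%N -> size (D t) = N)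
  (pi hpi : nat -> policy R X Y)
  (Hpi0 : pi 0%N = pref) (Hhpi0 : hpi 0%N = pref)
  (Hhpi_in : forall t, (t <= T)%N -> Pi (hpi t.+1))
  (Hhpi_min : forall t, (t <= T)%N -> forall p, Pi p ->
     emp_loss N l beta (D t) (pi t) (hpi t.+1) <= emp_loss N l beta (D t) (pi t) p)
  (Hpi_step : forall t, (t <= T)%N -> pi t.+1 = extrapolate alpha (hpi t.+1) (hpi t))
  (Hpi_in : forall t, (t <= T)%N -> Pi (pi t.+1)) :
  forall t, (t <= T)%N -> forall (x : X) (y : Y),
    hpi t.+1 x y =
      (apo_Z alpha beta pref hpi pi t x)^-1 * pref x y *
      expR (apo_exponent alpha beta hpi pi t x y).
Proof.
move=> t le_tT x.
have hpi_gt0 i : (i <= T.+1)%N -> forall y, 0 < hpi i x y.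
  case: i => [|i] le_iT y; first by rewrite Hhpi0; case: (HPi _ Hpref x).
  by case: (HPi _ (Hhpi_in i le_iT) x).
pose norm i := \sum_(y' : Y) hpi i.+1 x y' * powR (hpi i.+1 x y' / hpi i x y') alpha.
have ln_piS i : (i < T.+1)%N -> forall y, ln (pi i.+1 x y) =
    (1 + alpha) * ln (hpi i.+1 x y) - alpha * ln (hpi i x y) - ln (norm i).
  by move=> le_iT y; rewrite Hpi_step // ln_extrapolate // => y';
    rewrite hpi_gt0 // ltnW.
have ln_pi0 y : ln (pi 0%N x y) = ln (hpi 0%N x y) by rewrite Hpi0 Hhpi0.
apply: (@exp_tilt_of_ln_shift _ _ (hpi t.+1 x) (pref x)
    (apo_exponent alpha beta hpi pi t x)
    (- \sum_(i < t) apo_coef alpha t i.+1 * ln (norm i))) => [y|y||y].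
- by rewrite hpi_gt0 // ltnS.
- by rewrite -Hhpi0 hpi_gt0.
- exact: (HPi _ (Hhpi_in t le_tT) x).2.
- have /= := sum_apo_coef_reward (b := fun i y => ln (pi i x y))
    ln_pi0 ln_piS Halpha1 y (leqW le_tT).
  by rewrite apo_exponentE ?gt_eqF // => ->; rewrite Hhpi0; ring.
Qed.
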